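(* Let $X$ be a set, and let $\tau_1$ and $\tau_2$ be topologies on $X$. Suppose $\mathbb{B}_1=\{\mathcal{B}_1(x):x\in X\}$ is a weak base for $\tau_1$ and $\mathbb{B}_2=\{\mathcal{B}_2(x):x\in X\}$ is a weak base for $\tau_2$. For each $x\in X$ let $\mathcal{B}(x)=\{B_1\cup B_2: B_1\in\mathcal{B}_1(x),\ B_2\in\mathcal{B}_2(x)\}$. Then $\mathbb{B}=\{\mathcal{B}(x):x\in X\}$ is a weak base for the meet $\tau_1\wedge\tau_2$ (the greatest lower bound of $\tau_1,\tau_2$ in the lattice of topologies on $X$, i.e. $\tau_1\cap\tau_2$).
   Context: A weak base on a set $X$ is a family $\mathbb{B}=\{\mathcal{B}(x):x\in X\}$ of filterbases such that $x\in B$ for all $B\in\mathcal{B}(x)$. The topology induced by $\mathbb{B}$ is the one in which $U\subseteq X$ is open iff for each $x\in U$ there is $B\in\mathcal{B}(x)$ with $B\subseteq U$. ''$\mathbb{B}$ is a weak base for $\tau$'' means that $\tau$ is the topology induced by $\mathbb{B}$. *)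

From mathcomp Require Import all_boot.
From mathcomp Require Export boolp classical_sets.
Set Implicit Arguments. Unset Strict Implicit. Unset Printing Implicit Defensive.
Local Open Scope classical_set_scope.

Definition is_topology (X : Type) (tau : set (set X)) : Prop :=
  [/\ tau setT,
      (forall (I : Type) (U : I -> set X), (forall i, tau (U i)) ->
          tau (\bigcup_i U i))
    & (forall U V, tau U -> tau V -> tau (U `&` V))].

Definition filterbase (X : Type) (F : set (set X)) : Prop :=
  F !=set0 /\ forall A B, F A -> F B -> exists2 C, F C & C `<=` A `&` B.

Definition weak_base (X : Type) (B : X -> set (set X)) : Prop :=
  forall x, filterbase (B x) /\ forall b, B x b -> b x.

Definition induced_topology (X : Type) (B : X -> set (set X)) : set (set X) :=
  [set U | forall x, U x -> exists2 b, B x b & b `<=` U].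

Definition weak_base_for (X : Type) (B : X -> set (set X)) (tau : set (set X)) :=
  weak_base B /\ induced_topology B = tau.

Definition top_meet (X : Type) (tau1 tau2 : set (set X)) : set (set X) :=
  tau1 `&` tau2.

Definition union_base (X : Type) (B1 B2 : X -> set (set X)) : X -> set (set X) :=
  fun x => [set b | exists b1 b2, [/\ B1 x b1, B2 x b2 & b = b1 `|` b2]].

From mathcomp Require Import all_boot.
From mathcomp Require Import boolp classical_sets.
Local Open Scope classical_set_scope.

(* A set contains some [b1 `|` b2] around [x] iff it contains some member of
   [B1 x] and some member of [B2 x], so the union base induces exactly the
   intersection of the two induced topologies; directedness of [B1 x] and
   [B2 x] passes to unions componentwise. *)

Section UnionBase.
Variables (X : Type) (B1 B2 : X -> set (set X)).

Lemma filterbase_union_base x :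
  filterbase (B1 x) -> filterbase (B2 x) -> filterbase (union_base B1 B2 x).
Proof.
move=> [[a1 a1B] dir1] [[a2 a2B] dir2]; split; first by exists (a1 `|` a2), a1, a2.
move=> _ _ [b1 [b2 [b1B b2B ->]]] [c1 [c2 [c1B c2B ->]]].
have [d1 d1B sub1] := dir1 _ _ b1B c1B.
have [d2 d2B sub2] := dir2 _ _ b2B c2B.
exists (d1 `|` d2); first by exists d1, d2.
by move=> y [/sub1 [? ?]|/sub2 [? ?]]; split; by [left|right].
Qed.

Lemma weak_base_union_base :
  weak_base B1 -> weak_base B2 -> weak_base (union_base B1 B2).
Proof.
move=> wB1 wB2 x; have [fB1 memB1] := wB1 x; have [fB2 _] := wB2 x.
split; first exact: filterbase_union_base.
by move=> _ [b1 [b2 [b1B _ ->]]]; left; apply: memB1.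
Qed.

Lemma induced_topology_union_base :
  induced_topology (union_base B1 B2) =
  induced_topology B1 `&` induced_topology B2.
Proof.
apply/seteqP; split=> U /=.
  move=> Uopen; split=> x Ux; have [_ [b1 [b2 [b1B b2B ->]]] sub] := Uopen x Ux.
    by exists b1 => // y ?; apply: sub; left.
  by exists b2 => // y ?; apply: sub; right.
move=> [U1open U2open] x Ux.
have [b1 b1B sub1] := U1open x Ux; have [b2 b2B sub2] := U2open x Ux.
exists (b1 `|` b2); first by exists b1, b2.
by move=> y [/sub1|/sub2].
Qed.

End UnionBase.

Theorem lemma2p6 (X : Type) (tau1 tau2 : set (set X))
  (B1 B2 : X -> set (set X)) :
  is_topology tau1 -> is_topology tau2 ->
  weak_base_for B1 tau1 -> weak_base_for B2 tau2 ->
  weak_base_for (union_base B1 B2) (top_meet tau1 tau2).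
Proof.
move=> _ _ [wB1 <-] [wB2 <-]; split.
  exact: weak_base_union_base.
exact: induced_topology_union_base.
Qed.
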